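(* Let $\alpha=\sigma_1\sigma_2^{-1}\sigma_3^{-1}\in B_4$ and let $\lambda$ be the largest positive real root of $X^4-2X^3-2X+1$ (which equals $\mathrm{GR}(\alpha)$). Then $$\lambda>\sup\{R(B_\alpha(t_0)) : t_0\in\mathbb{C},\ |t_0|=1\},$$ i.e. the inequality of Theorem 1 is strict for this $\alpha$. Equivalently, for no $t_0$ with $|t_0|=1$ does the polynomial $X^3-(1-t_0-t_0^{-1})X^2+(t_0^{-2}-t_0^{-1}+1)X+t_0^{-1}$ have a root of modulus $\ge\lambda$.
   Context: $\alpha$ acts on $F_4$ (right action) by $(x_1)\alpha=x_1x_4x_1^{-1}$, $(x_2)\alpha=x_1$, $(x_3)\alpha=x_4^{-1}x_2x_4$, $(x_4)\alpha=x_4^{-1}x_3x_4$. $B_\alpha=(\varphi(\partial((x_i)\alpha)/\partial x_k))_{i,k}$ is its Burau matrix (Fox derivatives, $\varphi(x_i)=t$), whose characteristic polynomial is $(X-1)\big(X^3-(1-t-t^{-1})X^2+(t^{-2}-t^{-1}+1)X+t^{-1}\big)$; $B_\alpha(t_0)$ is its evaluation at $t=t_0$ and $R$ the spectral radius. *)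

From mathcomp Require Import all_boot all_order all_algebra.
Set Implicit Arguments. Unset Strict Implicit. Unset Printing Implicit Defensive.
Import Order.TTheory GRing.Theory Num.Theory.
Local Open Scope ring_scope.

(* Words in the free group F_4 = <x_1,...,x_4>: a word is a list of letters
   (i, b) with i : 'I_4 (index 0 stands for x_1, ..., 3 for x_4) and
   b = false for x_(i+1), b = true for x_(i+1)^{-1}. *)
Definition letter := ('I_4 * bool)%type.
Definition word := seq letter.

(* phi (Fox derivative d w / d x_k) where phi(x_i) = t, computed by the
   Fox rules d(uv) = du + u dv, d(x_k) = 1, d(x_k^{-1}) = - x_k^{-1}. *)
Fixpoint fox_phi (F : fieldType) (t : F) (k : 'I_4) (w : word) : F :=
  match w with
  | [::] => 0
  | (i, b) :: w' =>
      (if i == k then (if b then - t^-1 else 1) else 0)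
      + (if b then t^-1 else t) * fox_phi t k w'
  end.

Definition x1 : 'I_4 := @Ordinal 4 0 isT.
Definition x2 : 'I_4 := @Ordinal 4 1 isT.
Definition x3 : 'I_4 := @Ordinal 4 2 isT.
Definition x4 : 'I_4 := @Ordinal 4 3 isT.

(* The images of the generators under alpha = sigma_1 sigma_2^{-1} sigma_3^{-1}:
   x1 -> x1 x4 x1^{-1}, x2 -> x1, x3 -> x4^{-1} x2 x4, x4 -> x4^{-1} x3 x4. *)
Definition alpha_img (i : 'I_4) : word :=
  match val i with
  | 0 => [:: (x1, false); (x4, false); (x1, true)]
  | 1 => [:: (x1, false)]
  | 2 => [:: (x4, true); (x2, false); (x4, false)]
  | _ => [:: (x4, true); (x3, false); (x4, false)]
  end.

Definition burau_alpha (F : fieldType) (t0 : F) : 'M[F]_4 :=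
  \matrix_(i < 4, k < 4) fox_phi t0 k (alpha_img i).

Definition lam_poly (F : fieldType) : {poly F} :=
  'X^4 - 2%:R *: 'X^3 - 2%:R *: 'X + 1.

From HB Require Import structures.
From mathcomp Require Import all_boot all_order all_algebra.
From mathcomp Require Import lra ring.
Set Implicit Arguments. Unset Strict Implicit. Unset Printing Implicit Defensive.
Import Order.TTheory GRing.Theory Num.Theory.
Local Open Scope ring_scope.

(** An eigenvalue [z] of [B_alpha(t)] is [1] or a root of the cubic
    [X^3 - a X^2 - s a X + s] with [a = 1 - t - t^-1] and [s = t^-1].  When
    [|t| = 1], [a] is real and [s = conj t], so [conj z] is a root of the cubic
    with [s = t], which is the reversal of the first one; hence [1 / conj z] is
    a second root of the first cubic, distinct from [z] when [|z| > 1].  Vieta's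
    formulas for the root pairs [(z, 1 / conj z)] and [(conj z, 1 / z)] express
    [t] and [t^-1] in terms of [z] and [a]; eliminating [t] leaves two real
    equations in [r = |z|], [X = z + conj z] and [a], whose resultant in [a] is
    [r^6 F(X / 2r, r + 1/r)] for an explicit [F] that is positive once
    [r > 2.29].  On the other side, [X^4 - 2X^3 - 2X + 1] factors as
    [(X^2 - (1 + sqrt 3) X + 1) (X^2 - (1 - sqrt 3) X + 1)], so
    [lambda = (1 + sqrt 3 + sqrt (2 sqrt 3)) / 2 > 2.29]. *)

(* The real elements of a numeric closed field form a real field, where [lra] and
   [nra] apply. *)
Section RealSubfield.
Variable C : numClosedFieldType.

Record creal := CReal { creal_val : C; creal_valP : creal_val \is Num.real }.
HB.instance Definition _ := [isSub for creal_val].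
HB.instance Definition _ := [Choice of creal by <:].
HB.instance Definition _ := [SubChoice_isSubIntegralDomain of creal by <:].
HB.instance Definition _ := [SubIntegralDomain_isSubField of creal by <:].

Definition creal_le (x y : creal) := creal_val x <= creal_val y.
Definition creal_lt (x y : creal) := creal_val x < creal_val y.
Definition creal_norm (x : creal) : creal := CReal (normr_real (creal_val x)).

Lemma creal_addr_ge0 (x y : creal) :
  creal_le 0 x -> creal_le 0 y -> creal_le 0 (x + y).
Proof. exact: addr_ge0. Qed.

Lemma creal_mulr_ge0 (x y : creal) :
  creal_le 0 x -> creal_le 0 y -> creal_le 0 (x * y).
Proof. exact: mulr_ge0. Qed.

Lemma creal_le0_anti (x : creal) : creal_le 0 x -> creal_le x 0 -> x = 0.
Proof. by move=> x_ge0 x_le0; apply/val_inj/eqP; rewrite eq_le; apply/andP. Qed.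

Lemma creal_subr_ge0 (x y : creal) : creal_le 0 (y - x) = creal_le x y.
Proof. exact: subr_ge0. Qed.

Lemma creal_ge0_total (x : creal) : creal_le 0 x || creal_le x 0.
Proof. exact: creal_valP. Qed.

Lemma creal_normN (x : creal) : creal_norm (- x) = creal_norm x.
Proof. by apply: val_inj; rewrite /= normrN. Qed.

Lemma creal_ger0_norm (x : creal) : creal_le 0 x -> creal_norm x = x.
Proof. by move=> x_ge0; apply: val_inj; rewrite /= ger0_norm. Qed.

Lemma creal_lt_def (x y : creal) : creal_lt x y = (y != x) && creal_le x y.
Proof. exact: lt_def. Qed.

HB.instance Definition _ := Num.IntegralDomain_isLeReal.Build creal
  creal_addr_ge0 creal_mulr_ge0 creal_le0_anti creal_subr_ge0 creal_ge0_total
  creal_normN creal_ger0_norm creal_lt_def.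

End RealSubfield.

Definition cubic (R : pzRingType) (a s z : R) := z^+3 - a * z^+2 - s * a * z + s.

Lemma ord4_ind (P : 'I_4 -> Prop) : P x1 -> P x2 -> P x3 -> P x4 -> forall i, P i.
Proof.
by move=> P1 P2 P3 P4 [[|[|[|[|//]]]] lti]; rewrite (bool_irrelevance lti isT).
Qed.

Lemma sum_ord4 (R : nmodType) (f : 'I_4 -> R) : \sum_i f i = f x1 + f x2 + f x3 + f x4.
Proof.
rewrite !big_ord_recl big_ord0 addr0 !addrA.
by congr (_ + _ + _ + _); congr f; apply: val_inj.
Qed.

Lemma burau_alpha_eigenvector_eqs (F : fieldType) (t z : F) (v : 'rV_4) :
  t != 0 -> v *m burau_alpha t = z *: v ->
  [/\ v 0 x1 * (1 - t) + v 0 x2 = z * v 0 x1,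
      v 0 x3 / t = z * v 0 x2,
      v 0 x4 / t = z * v 0 x3 &
      v 0 x1 * t + (v 0 x3 + v 0 x4) * (1 - t^-1) = z * v 0 x4].
Proof.
move=> t_neq0 /matrixP eq_v.
have eq_col k : \sum_j v 0 j * fox_phi t k (alpha_img j) = z * v 0 k.
  by have := eq_v 0 k; rewrite !mxE; under eq_bigr do rewrite mxE.
have := (eq_col x1, eq_col x2, eq_col x3, eq_col x4).
rewrite !sum_ord4 /= => -[[[E1 E2] E3] E4].
by split; [rewrite -E1 | rewrite -E2 | rewrite -E3 | rewrite -E4]; field.
Qed.

Lemma eigenvalue_burau_alpha (F : fieldType) (t z : F) :
  t != 0 -> eigenvalue (burau_alpha t) z ->
  (z - 1) * cubic (1 - t - t^-1) t^-1 z = 0.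
Proof.
move=> t_neq0 /eigenvalueP[v /(burau_alpha_eigenvector_eqs t_neq0)[E1 E2 E3 E4] v_neq0].
pose w := v 0 x2.
have v3E : v 0 x3 = t * z * w by rewrite /w -mulrA -E2; field.
have v4E : v 0 x4 = t^+2 * z^+2 * w by rewrite -[v 0 x4](@divfK _ t) // E3 v3E; ring.
have v1E : v 0 x1 = (t * z^+3 - t * z^+2 + z^+2 - z + z / t) * w.
  apply: (mulIf t_neq0); rewrite -[X in X = _](addrK ((v 0 x3 + v 0 x4) * (1 - t^-1))).
  by rewrite E4 v3E v4E; field.
have w_neq0 : w != 0.
  apply: contraNneq v_neq0 => w0; apply/eqP/rowP; apply: ord4_ind;
  by rewrite mxE ?v1E ?v3E ?v4E -/w w0 ?mulr0.
apply: (mulIf w_neq0); rewrite mul0r.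
have -> : (z - 1) * cubic (1 - t - t^-1) t^-1 z * w
    = - t^-1 * (v 0 x1 * (1 - t) + w - z * v 0 x1).
  by rewrite v1E /cubic; field.
by rewrite E1 subrr mulr0.
Qed.


Lemma cubic_root_pair (F : idomainType) (a s z w : F) :
  z != w -> cubic a s z = 0 -> cubic a s w = 0 -> z * w * (a - z - w) + s = 0.
Proof.
move=> neq_zw z_root w_root.
have sum_eq0 : z^+2 + z * w + w^+2 - a * (z + w) - s * a = 0.
  have : (z - w) * (z^+2 + z * w + w^+2 - a * (z + w) - s * a) = 0.
    by rewrite -[RHS](subrr 0) -{1}z_root -w_root /cubic; ring.
  by move/eqP; rewrite mulf_eq0 subr_eq0 (negbTE neq_zw) => /eqP.
by rewrite -z_root -[cubic _ _ _](subr0 _) -(mulr0 z) -sum_eq0 /cubic; ring.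
Qed.

Lemma cubic_reciprocal_root (F : fieldType) (a s t w : F) :
  s * t = 1 -> w != 0 -> cubic a t w = 0 -> cubic a s w^-1 = 0.
Proof.
move=> st1 w_neq0 w_root.
have : w^+3 * cubic a s w^-1 = (1 - s * t) * (1 - a * w) + s * cubic a t w.
  by rewrite /cubic; field.
rewrite st1 w_root subrr mul0r mulr0 addr0 => /eqP.
by rewrite mulf_eq0 expf_eq0 (negbTE w_neq0) andbF => /eqP.
Qed.

(* With [P = z zb] and [X = z + zb], these are [a = 1 - t - s] and [t s = 1]
   after substituting the values of [s] and [t] given by Vieta's formulas for
   the roots [z, 1/zb] and [zb, 1/z] below. *)
Definition vieta_eq1 (R : pzRingType) (P X a : R) :=
  (P * a - (P + 1) * X) * (3 * P - X^+2) - P^+2.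
Definition vieta_eq2 (R : pzRingType) (P X a : R) :=
  P * a^+2 - a * (P + 1) * X + (P + 1)^+2 - P.

Lemma cubic_conj_roots_vieta (F : fieldType) (a s t z zb : F) :
  s * t = 1 -> a = 1 - t - s -> z * zb != 1 -> z != 0 -> zb != 0 ->
  cubic a s z = 0 -> cubic a t zb = 0 ->
  vieta_eq1 (z * zb) (z + zb) a = 0 /\ vieta_eq2 (z * zb) (z + zb) a = 0.
Proof.
move=> st1 aE zzb_neq1 z_neq0 zb_neq0 z_root zb_root.
have z_neq_zbV : z != zb^-1 by apply: contra zzb_neq1 => /eqP->; rewrite mulVf.
have zb_neq_zV : zb != z^-1 by apply: contra zzb_neq1 => /eqP->; rewrite mulfV.
have ts1 : t * s = 1 by rewrite mulrC.
have := cubic_root_pair z_neq_zbV z_root (cubic_reciprocal_root st1 zb_neq0 zb_root).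
have := cubic_root_pair zb_neq_zV zb_root (cubic_reciprocal_root ts1 z_neq0 z_root).
move=> /eqP; rewrite addrC addr_eq0 => /eqP tE /eqP; rewrite addrC addr_eq0 => /eqP sE.
split.
- have -> : vieta_eq1 (z * zb) (z + zb) a = (z * zb)^+2 * (a - (1 - t - s)).
    by rewrite /vieta_eq1 tE sE; field; rewrite z_neq0 zb_neq0.
  by rewrite -aE subrr mulr0.
- have -> : vieta_eq2 (z * zb) (z + zb) a = z * zb * (t * s - 1).
    by rewrite /vieta_eq2 tE sE; field; rewrite z_neq0 zb_neq0.
  by rewrite ts1 subrr mulr0.
Qed.

Definition vieta_resultant (R : pzRingType) (P X : R) :=
  P^+3 + P * (P + 1) * X * (3 * P - X^+2) + (P^+2 + P + 1) * (3 * P - X^+2)^+2.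

Lemma vieta_resultant_eq0 (R : idomainType) (P X a : R) : P != 0 ->
  vieta_eq1 P X a = 0 -> vieta_eq2 P X a = 0 -> vieta_resultant P X = 0.
Proof.
move=> P_neq0 eq1 eq2; apply: (mulfI P_neq0); rewrite mulr0.
have -> : P * vieta_resultant P X = (3 * P - X^+2)^+2 * P * vieta_eq2 P X a
    - vieta_eq1 P X a * (vieta_eq1 P X a + 2 * P^+2 + (P + 1) * X * (3 * P - X^+2)).
  by rewrite /vieta_resultant /vieta_eq1 /vieta_eq2; ring.
by rewrite eq1 eq2 mulr0 mul0r subrr.
Qed.

(* For [z = r e^(i theta)] this is evaluated at [c = cos theta], [rho = r + 1/r]. *)
Definition cheb_form (R : pzRingType) (c rho : R) :=
  (3 - 4 * c^+2)^+2 * (rho^+2 - 1) + 2 * c * (3 - 4 * c^+2) * rho + 1.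

Lemma vieta_resultant_cheb (F : numFieldType) (r X : F) : r != 0 ->
  vieta_resultant (r^+2) X = r^+6 * cheb_form (X / (2 * r)) (r + r^-1).
Proof. by move=> r_neq0; rewrite /vieta_resultant /cheb_form; field. Qed.

Lemma cheb_form_pos_at (R : realFieldType) (c : R) :
  c^+2 <= 1 -> 0 < cheb_form c (68/25).
Proof.
move=> c2_le1; rewrite /cheb_form.
set e := 3 - 4 * c^+2.
have e_ge : -1 <= e by rewrite /e; nra.
have e_le : e <= 3 by rewrite /e; nra.
set A := (4624/625 - 1) * e^+2 + 1.
have A_gt0 : 0 < A by rewrite /A; nra.
have -> : e^+2 * ((68/25)^+2 - 1) + 2 * c * e * (68/25) + 1 = A + 2 * c * e * (68/25).
  by rewrite /A; field.
(* Squaring [|2 c e rho0| < A] and using [4 c^2 = 3 - e] leaves a quartic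
   inequality in [e], certified by the two squares below. *)
have lt_A2 : 4624/625 * e^+2 * (3 - e) < A^+2.
  have := sqr_ge0 ((4624/625 - 1) * e^+2 + (2312/3999) * e - 17/20).
  have := sqr_ge0 (e + 43/100).
  rewrite /A; nra.
have c2E : 4 * c^+2 = 3 - e by rewrite /e; ring.
have : (2 * c * e * (68/25))^+2 < A^+2.
  have -> : (2 * c * e * (68/25))^+2 = 4624/625 * e^+2 * (4 * c^+2) by field.
  by rewrite c2E.
nra.
Qed.

Lemma cheb_form_pos (R : realFieldType) (c rho : R) :
  c^+2 <= 1 -> 68/25 <= rho -> 0 < cheb_form c rho.
Proof.
move=> c2_le1 rho_ge.
move: (cheb_form_pos_at c2_le1); rewrite /cheb_form.
set e := 3 - 4 * c^+2 => base.
have c2E : c^+2 = (3 - e) / 4 by rewrite /e; field.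
set rho0 := 68/25 : R in base rho_ge.
(* Either the quadratic in [rho] increases from [rho0] on, or [e^2 rho0 < - e c],
   which forces [e^2 + c^2 < 1]. *)
have [mono | anti] := lerP 0 (e * (e * rho0 + c)).
  have : 0 <= (rho - rho0) * (e * (e * rho0 + c)) by rewrite mulr_ge0 ?subr_ge0.
  have := sqr_ge0 (e * (rho - rho0)).
  nra.
have -> : e^+2 * (rho^+2 - 1) + 2 * c * e * rho + 1
    = (e * rho + c)^+2 + (1 - e^+2 - c^+2) by ring.
suff : 0 < 1 - e^+2 - c^+2 by have := sqr_ge0 (e * rho + c); lra.
have lt_ec : e^+2 * rho0 < - (e * c) by nra.
have e_neq0 : e != 0 by apply: contraTneq lt_ec => ->; rewrite /rho0; lra.
have e2_gt0 : 0 < e^+2 by rewrite exprn_even_gt0.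
have lt_sq : e^+2 * (e^+2 * rho0^+2) < e^+2 * c^+2.
  have x_ge0 : 0 <= e^+2 * rho0 by rewrite /rho0; nra.
  have : 0 < (- (e * c) - e^+2 * rho0) * (- (e * c) + e^+2 * rho0).
    by rewrite mulr_gt0 // ?subr_gt0; lra.
  have -> : e^+2 * (e^+2 * rho0^+2) = (e^+2 * rho0)^+2 by ring.
  have -> : e^+2 * c^+2 = (- (e * c))^+2 by ring.
  nra.
rewrite ltr_pM2l // c2E /rho0 in lt_sq.
rewrite c2E; nra.
Qed.

Lemma vieta_no_large_root (R : realFieldType) (r X a : R) :
  229/100 < r -> X^+2 <= 4 * r^+2 ->
  vieta_eq1 (r^+2) X a = 0 -> vieta_eq2 (r^+2) X a = 0 -> False.
Proof.
move=> r_gt X2_le eq1 eq2.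
have r_gt0 : 0 < r by apply: lt_trans r_gt; lra.
have r_neq0 : r != 0 by rewrite gt_eqF.
have := vieta_resultant_eq0 (expf_neq0 2 r_neq0) eq1 eq2.
rewrite vieta_resultant_cheb // => /eqP; apply/negP; rewrite gt_eqF //.
apply: mulr_gt0; first exact: exprn_gt0.
apply: cheb_form_pos.
- have r2_gt0 : 0 < r^+2 by exact: exprn_gt0.
  by rewrite expr_div_n exprMn ler_pdivrMr ?mul1r; nra.
- by rewrite -(ler_pM2r r_gt0) [(r + _) * _]mulrDl mulVf //; nra.
Qed.

Lemma lam_poly_root (F : numFieldType) (s d : F) :
  s^+2 = 3 -> d^+2 = 2 * s -> root (lam_poly F) ((1 + s + d) / 2).
Proof.
move=> s2E d2E; apply/rootP.
set r := (1 + s + d) / 2.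
have -> : (lam_poly F).[r]
    = (d^+2 - 2 * s - (s^+2 - 3)) / 4 * (r^+2 + (s - 1) * r + 1) + (s^+2 - 3) * r^+2.
  by rewrite /lam_poly !(hornerD, hornerN, hornerZ, hornerXn, hornerX, hornerC) /r; field.
by rewrite d2E s2E !subrr !(mul0r, add0r, subr0).
Qed.

Lemma lam_poly_root_gt (C : numClosedFieldType) :
  exists2 r : C, 229/100 < r & root (lam_poly C) r.
Proof.
pose s := sqrtC (3 : C); pose d := sqrtC (2 * s).
have s_ge0 : 0 <= s by rewrite sqrtC_ge0 ler0n.
have d_ge0 : 0 <= d by rewrite sqrtC_ge0 mulr_ge0 ?ler0n.
have s2E : s^+2 = 3 by rewrite sqrtCK.
have d2E : d^+2 = 2 * s by rewrite sqrtCK.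
exists ((1 + s + d) / 2); last exact: lam_poly_root.
pose sR := CReal (ger0_real s_ge0); pose dR := CReal (ger0_real d_ge0).
have sR2E : sR^+2 = 3 by apply: val_inj.
have dR2E : dR^+2 = 2 * sR by apply: val_inj.
have sR_ge0 : 0 <= sR := s_ge0.
have dR_ge0 : 0 <= dR := d_ge0.
suff : 229/100 < (1 + sR + dR) / 2 by [].
have : 173/100 < sR by nra.
nra.
Qed.

Lemma conjC_cubic (C : numClosedFieldType) (a s z : C) :
  a \is Num.real -> (cubic a s z)^* = cubic a s^* z^*.
Proof.
move=> /CrealP a_real.
by rewrite /cubic !(rmorphB, rmorphD, rmorphM, rmorphXn) /= a_real.
Qed.

Lemma unitary_cubic_root_norm_le (C : numClosedFieldType) (t z : C) :
  `|t| = 1 -> cubic (1 - t - t^-1) t^-1 z = 0 -> `|z| <= 229/100.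
Proof.
move=> t_norm1 z_root.
have tV : t^-1 = t^* by rewrite invC_norm t_norm1 expr1n invr1 mul1r.
have tt1 : t^* * t = 1 by rewrite mulrC -normCK t_norm1 expr1n.
rewrite tV in z_root; set a := 1 - t - t^* in z_root.
have a_real : a \is Num.real.
  by apply/CrealP; rewrite /a !rmorphB /= conjC1 conjCK addrAC.
have zb_root : cubic a t z^* = 0.
  by rewrite -[t]conjCK -conjC_cubic // z_root conjC0.
have c_real : (229/100 : C) \is Num.real by rewrite gtr0_real // divr_gt0 ?ltr0n.
rewrite real_leNgt ?normr_real //; apply/negP => z_gt.
have z_gt1 : 1 < `|z| by apply: lt_trans z_gt; rewrite ltr_pdivlMr ?mul1r ?ltr_nat.
have zzbE : z * z^* = `|z|^+2 by rewrite normCK.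
have zzb_neq1 : z * z^* != 1.
  by rewrite zzbE; apply: contraTneq z_gt1 => /eqP; rewrite sqrp_eq1 // => /eqP->; rewrite ltxx.
have z_neq0 : z != 0 by rewrite -normr_eq0 gt_eqF // (lt_trans ltr01).
have zb_neq0 : z^* != 0 by rewrite conjC_eq0.
have [eq1 eq2] :=
  cubic_conj_roots_vieta tt1 erefl zzb_neq1 z_neq0 zb_neq0 z_root zb_root.
rewrite zzbE in eq1 eq2.
have X_real : z + z^* \is Num.real by apply/CrealP; rewrite rmorphD /= conjCK addrC.
have X2_le : (z + z^*)^+2 <= 4 * `|z|^+2.
  rewrite -subr_ge0 (_ : _ - _ = `|z - z^*|^+2) ?exprn_ge0 //.
  by rewrite !normCK rmorphB /= conjCK; ring.
apply: (@vieta_no_large_root (creal C) (CReal (normr_real z)) (CReal X_real)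
  (CReal a_real)) => //; exact: val_inj.
Qed.

Theorem mainTheorem7 (C : numClosedFieldType) (lam : C)
  (lam_pos : 0 < lam) (lam_root : root (lam_poly C) lam)
  (lam_max : forall r : C, 0 < r -> root (lam_poly C) r -> r <= lam) :
  exists c : C, c \is Num.real /\ c < lam /\
    forall t0 : C, `|t0| = 1 ->
      forall z : C, eigenvalue (burau_alpha t0) z -> `|z| <= c.
Proof.
have c_gt0 : (0 : C) < 229/100 by rewrite divr_gt0 ?ltr0n.
exists (229/100); split; first exact: gtr0_real.
split.
  have [r r_gt r_root] := lam_poly_root_gt C.
  by apply: (lt_le_trans r_gt); apply: lam_max r_root; apply: lt_trans r_gt.
move=> t t_norm1 z z_eig.
have t_neq0 : t != 0 by rewrite -normr_eq0 t_norm1 oner_neq0.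
have /eqP := eigenvalue_burau_alpha t_neq0 z_eig.
rewrite mulf_eq0 subr_eq0 => /orP[/eqP-> | /eqP z_root].
  by rewrite normr1 ler_pdivlMr ?mul1r ?ler_nat.
exact: unitary_cubic_root_norm_le z_root.
Qed.
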